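(* Let $G$ be a uniformly dense graph with at least one edge and maximum degree $\Delta(G)$. Then $G$ is $(\rho(G)/\Delta(G))$-tough. If, furthermore, $G$ is regular and connected, then $G$ is $1$-tough.
   Context: Graphs are finite and simple (no loops, no multiple edges). The cycle matroid $M(G)$ has ground set $E$ and bases the spanning trees (maximal acyclic edge subsets). For $A\subseteq E$, $c(A)$ is the number of connected components of the graph $(V,A)$, and $\operatorname{rank}(A)=|V|-c(A)$. The density of $G$ is $\rho(G)=|E|/\operatorname{rank}(E)$. $G$ is uniformly dense if $|A|/\operatorname{rank}(A)\le\rho(G)$ for every nonempty $A\subseteq E$. A graph is $t$-tough if for every set $U$ of $k$ vertices, removing $U$ (and its incident edges) increases the number of connected components by at most $k/t$; the complete graph is considered $t$-tough for every $t$. *)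

(* A finite simple graph is a symmetric irreflexive relation
   e : rel T on a finite vertex type T. *)
From HB Require Import structures.
From mathcomp Require Import all_boot all_order all_algebra.
Set Implicit Arguments. Unset Strict Implicit. Unset Printing Implicit Defensive.
Import Order.TTheory GRing.Theory Num.Theory.

Section Graphs.
Variable T : finType.

Definition ncomp (V : {set T}) (r : rel T) : nat :=
  let rV := [rel x y | [&& x \in V, y \in V & r x y]] in
  #|[set [set y in V | connect rV x y] | x in V]|.

Definition edges (e : rel T) : {set {set T}} :=
  [set [set x; y] | x in T, y in T & e x y].

Definition comps (A : {set {set T}}) : nat :=
  ncomp [set: T] (fun x y => [set x; y] \in A).

(* rank(A) = |V| - c(A) in the cycle matroid *)
Definition mrank (A : {set {set T}}) : nat := #|T| - comps A.

Definition density (e : rel T) : rat :=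
  (#|edges e|%:R / (mrank (edges e))%:R)%R.

Definition uniformly_dense (e : rel T) : Prop :=
  forall A : {set {set T}}, A \subset edges e -> A != set0 ->
    (#|A|%:R / (mrank A)%:R <= density e)%R.

Definition degree (e : rel T) (v : T) : nat := #|[set w | e v w]|.

Definition max_degree (e : rel T) : nat := \max_(v : T) degree e v.

Definition regular (e : rel T) : Prop :=
  forall v w : T, degree e v = degree e w.

Definition comps_minus (e : rel T) (U : {set T}) : nat := ncomp (~: U) e.

Definition connected_graph (e : rel T) : Prop := ncomp [set: T] e = 1%N.

Definition tough (e : rel T) (t : rat) : Prop :=
  forall U : {set T},
    ((comps_minus e U)%:R - (ncomp [set: T] e)%:R <= #|U|%:R / t)%R.

End Graphs.

From HB Require Import structures.
From mathcomp Require Import all_boot all_order all_algebra lra.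
Import Order.TTheory GRing.Theory Num.Theory.
Set Implicit Arguments. Unset Strict Implicit. Unset Printing Implicit Defensive.

(** Let U be a set of k vertices, c = c(G), c' = c(G - U), and let A be the
  edge set of G - U.  In the spanning subgraph (V, A) the vertices of U are
  isolated, so rank A = n - c' - k, and every edge outside A meets U, so
  |E| <= |A| + k Δ.  Uniform density gives |A| <= ρ rank A, while
  |E| = ρ (n - c); hence ρ (c' - c) <= k (Δ - ρ) <= k Δ.  If G is Δ-regular,
  counting edge ends gives Δ n = 2 |E| <= 2 ρ n, so Δ - ρ <= ρ and
  c' - c <= k. *)

Section Components.
Variable X : finType.

Lemma eq_in_ncomp (V : {set X}) (r1 r2 : rel X) :
  {in V &, r1 =2 r2} -> ncomp V r1 = ncomp V r2.
Proof.
move=> eq_r; rewrite /ncomp /=; congr #|pred_of_set _|; apply: eq_in_imset => x _.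
apply/setP => y; rewrite !inE; congr (_ && _); apply: eq_connect => a b /=.
by case: (boolP (a \in V)) => // aV; case: (boolP (b \in V)) => // bV; rewrite eq_r.
Qed.

Lemma ncompT (r : rel X) :
  ncomp [set: X] r = #|[set [set y | connect r x y] | x in [set: X]]|.
Proof.
rewrite /ncomp /=; congr #|pred_of_set _|; apply: eq_imset => x.
apply/setP => y; rewrite !inE.
by apply: eq_connect => a b; rewrite /= !inE.
Qed.

Lemma ncomp_le_card (V : {set X}) (r : rel X) : ncomp V r <= #|V|.
Proof. exact: leq_imset_card. Qed.

Lemma ncomp_setT_isolated (V : {set X}) (r : rel X) :
  (forall x y, r x y -> (x \in V) && (y \in V)) ->
  ncomp [set: X] r = ncomp V r + #|~: V|.
Proof.
move=> rV; set comp := fun x => [set y | connect r x y].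
have restrict_r : [rel x y | [&& x \in V, y \in V & r x y]] =2 r.
  by move=> x y /=; case rxy: (r x y); rewrite ?andbF // andbT rV.
have closedV : closed r V by move=> x y /rV /andP [-> ->].
have ncompV : ncomp V r = #|comp @: V|.
  rewrite /ncomp /=; congr #|pred_of_set _|; apply: eq_in_imset => x xV.
  apply/setP => y; rewrite !inE (eq_connect restrict_r).
  by apply/andP/idP => [[] //|cxy]; rewrite -(closed_connect closedV cxy).
have comp_out : {in ~: V, comp =1 set1}.
  move=> x; rewrite inE => xV; apply/setP => y; rewrite !inE.
  apply/idP/eqP => [/connectP [[|z p] /= xzp -> //] | ->]; last exact: connect0.
  by case/andP: xzp => /rV; rewrite (negbTE xV).
rewrite ncompT ncompV -(setUCr V) imsetU (eq_in_imset comp_out) cardsU.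
rewrite (card_in_imset (in2W set1_inj)).
suff -> : comp @: V :&: [set [set x] | x in ~: V] = set0 by rewrite cards0 subn0.
apply/setP => C; rewrite !inE; apply/andP => -[/imsetP [x xV ->] /imsetP [u]].
rewrite inE => uV /setP /(_ x); rewrite !inE connect0 => /esym/eqP xu.
by rewrite -xu xV in uV.
Qed.

Lemma ncomp_lt_card (r : rel X) x y :
  symmetric r -> x != y -> r x y -> ncomp [set: X] r < #|X|.
Proof.
move=> r_sym neq_xy rxy; rewrite ncompT; set comp := fun z => [set w | connect r z w].
have comp_xy : comp x = comp y.
  by apply/setP => w; rewrite !inE (same_connect (sym_connect_sym r_sym) (connect1 rxy)).
have -> : comp @: [set: X] = comp @: ([set: X] :\ y).
  apply/eqP; rewrite eqEsubset (imsetS _ (subsetT _)) andbT.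
  apply/subsetP => C /imsetP [z _ ->]; case: (eqVneq z y) => [->|neq_zy].
    by rewrite -comp_xy imset_f // !inE neq_xy.
  by rewrite imset_f // !inE neq_zy.
apply: leq_ltn_trans (leq_imset_card _ _) _.
by rewrite -cardsT (cardsD1 y [set: X]) inE.
Qed.

End Components.

Lemma card_set_sum (K : finType) (D : {set K}) (P : pred K) :
  #|[set k in D | P k]| = \sum_(k in D) P k.
Proof. by rewrite -sum1dep_card big_mkcondr; apply: eq_bigr => k _; case: (P k). Qed.

Lemma double_count (I J : finType) (A : {set I}) (B : {set J}) (R : I -> J -> bool) :
  \sum_(i in A) #|[set j in B | R i j]| = \sum_(j in B) #|[set i in A | R i j]|.
Proof.
under eq_bigr do rewrite card_set_sum.
by rewrite exchange_big; apply: eq_bigr => j _; rewrite card_set_sum.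
Qed.

Section Rank.
Variable T : finType.

Lemma comps_le_card (A : {set {set T}}) : comps A <= #|T|.
Proof. by rewrite /comps (leq_trans (ncomp_le_card _ _)) ?cardsT. Qed.

Lemma comps_lt_card (A : {set {set T}}) x y :
  x != y -> [set x; y] \in A -> comps A < #|T|.
Proof. by apply: ncomp_lt_card => a b /=; rewrite setUC. Qed.

Lemma natr_mrank (A : {set {set T}}) :
  ((mrank A)%:R = #|T|%:R - (comps A)%:R :> rat)%R.
Proof. by rewrite natrB ?comps_le_card. Qed.

End Rank.

Section Graph.
Variables (T : finType) (e : rel T).
Hypotheses (e_sym : symmetric e) (e_irr : irreflexive e).

Lemma mem_edges x y : ([set x; y] \in edges e) = e x y.
Proof.
apply/imset2P/idP => [[a b _] | exy]; last by exists x y; rewrite ?inE.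
rewrite inE => /andP [_ eab] /setP eq_xy.
have := eq_xy a; have := eq_xy b; have := eq_xy x; have := eq_xy y.
rewrite !inE !eqxx ?orbT /= => /esym/orP [] /eqP -> /esym/orP [] /eqP -> //.
- by rewrite orbb => /eqP ba; rewrite ba e_irr in eab.
- by rewrite e_sym.
- by rewrite !orbb => _ /eqP ab; rewrite ab e_irr in eab.
Qed.

Lemma edgesP S :
  reflect (exists2 xy : T * T, S = [set xy.1; xy.2] & e xy.1 xy.2) (S \in edges e).
Proof.
apply: (iffP imset2P) => [[x y _] | [[x y] -> /= exy]].
  by rewrite inE => /andP [_ exy] ->; exists (x, y).
by exists x y; rewrite ?inE.
Qed.

Lemma comps_edges : comps (edges e) = ncomp [set: T] e.
Proof. by apply: eq_in_ncomp => x y _ _; rewrite mem_edges. Qed.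

Definition edges_minus (U : {set T}) := [set S in edges e | S \subset ~: U].

Lemma edges_minus_sub U : edges_minus U \subset edges e.
Proof. by apply/subsetP => S; rewrite inE => /andP []. Qed.

Lemma comps_edges_minus U : comps (edges_minus U) = comps_minus e U + #|U|.
Proof.
have mem_minus x y : ([set x; y] \in edges_minus U) = [&& x \in ~: U, y \in ~: U & e x y].
  by rewrite inE mem_edges subUset !sub1set andbC andbA.
rewrite /comps (ncomp_setT_isolated (V := ~: U)) ?setCK; last first.
  by move=> x y; rewrite mem_minus => /and3P [-> ->].
by congr (_ + _); apply: eq_in_ncomp => x y xU yU; rewrite mem_minus xU yU.
Qed.

Lemma degree_incident v : degree e v = #|[set S in edges e | v \in S]|.
Proof.
rewrite /degree -(card_in_imset (f := fun w => [set v; w])); last first.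
  move=> w1 w2; rewrite !inE => evw1 _ /setP /(_ w1).
  rewrite !inE eqxx orbT => /esym/orP [/eqP w1v | /eqP //].
  by rewrite w1v e_irr in evw1.
apply: eq_card => S; rewrite inE.
apply/imsetP/andP => [[w] | [/edgesP [[x y] -> /= exy]]].
  by rewrite inE => evw ->; rewrite mem_edges evw !inE eqxx.
rewrite !inE => /orP [] /eqP ->; first by exists y; rewrite ?inE.
by exists x; rewrite ?inE 1?e_sym // setUC.
Qed.

Lemma handshake : \sum_(v in [set: T]) degree e v = #|edges e| * 2.
Proof.
under eq_bigr do rewrite degree_incident.
rewrite double_count -sum_nat_const; apply: eq_bigr => _ /edgesP [[x y] -> /= exy].
have -> : [set v in [set: T] | v \in [set x; y]] = [set x; y].
  by apply/setP => v; rewrite !inE.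
by rewrite cards2; case: eqP exy => // ->; rewrite e_irr.
Qed.

Lemma card_edges_le_minus U : #|edges e| <= #|edges_minus U| + \sum_(u in U) degree e u.
Proof.
rewrite -(cardsID (edges_minus U) (edges e)) (setIidPr (edges_minus_sub U)) leq_add2l.
set D := edges e :\: edges_minus U.
apply: (@leq_trans (\sum_(S in D) #|[set u in U | u \in S]|)).
  rewrite -sum1_card leq_sum // => S; rewrite !inE => /andP [+ SE].
  rewrite SE card_gt0 => /subsetPn [u uS]; rewrite inE negbK => uU.
  by apply/set0Pn; exists u; rewrite inE uU.
rewrite -double_count leq_sum // => u _; rewrite degree_incident subset_leq_card //.
by apply/subsetP => S; rewrite !inE => /andP [/andP [_ ->] ->].
Qed.

Lemma edge_neq x y : e x y -> x != y.
Proof. by apply: contraTneq => ->; rewrite e_irr. Qed.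

Lemma mrank_gt0 (A : {set {set T}}) : A \subset edges e -> A != set0 -> 0 < mrank A.
Proof.
move=> sAE /set0Pn [S SA]; have /edgesP [[x y] /= eS exy] := subsetP sAE _ SA.
by rewrite subn_gt0 (comps_lt_card (edge_neq exy)) // -eS.
Qed.

Lemma density_ge0 : (0 <= density e)%R.
Proof. by rewrite divr_ge0. Qed.

Lemma card_edges_density : (#|edges e|%:R = density e * (mrank (edges e))%:R :> rat)%R.
Proof.
have [E0 | E_neq0] := eqVneq (edges e) set0; first by rewrite /density E0 cards0 !mul0r.
by rewrite divfK // pnatr_eq0 -lt0n mrank_gt0.
Qed.

Lemma card_le_density_mrank (A : {set {set T}}) : uniformly_dense e -> A \subset edges e ->
  (#|A|%:R <= density e * (mrank A)%:R :> rat)%R.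
Proof.
move=> dense sAE; have [-> | A_neq0] := eqVneq A set0.
  by rewrite cards0 mulr_ge0 ?density_ge0.
by rewrite -ler_pdivrMr ?ltr0n ?mrank_gt0 // dense.
Qed.

Lemma density_comps_minus_le U : uniformly_dense e ->
  (density e * ((comps_minus e U)%:R - (ncomp [set: T] e)%:R) <=
   #|U|%:R * ((max_degree e)%:R - density e) :> rat)%R.
Proof.
move=> dense; have card_A := card_le_density_mrank dense (edges_minus_sub U).
rewrite natr_mrank comps_edges_minus natrD in card_A.
have sum_deg : \sum_(u in U) degree e u <= #|U| * max_degree e.
  by rewrite -sum_nat_const leq_sum // => u _; apply: leq_bigmax.
have := leq_trans (card_edges_le_minus U) (leq_add (leqnn _) sum_deg).
rewrite -(ler_nat rat) natrD natrM card_edges_density natr_mrank comps_edges => card_E.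
lra.
Qed.

Hypotheses (E_neq0 : edges e != set0) (dense : uniformly_dense e).

Lemma density_gt0 : (0 < density e)%R.
Proof. by rewrite divr_gt0 // ltr0n ?card_gt0 ?mrank_gt0. Qed.

Lemma max_degree_gt0 : 0 < max_degree e.
Proof.
case/set0Pn: E_neq0 => S /edgesP [[x y] _ /= exy].
by apply: leq_trans (leq_bigmax x); rewrite card_gt0; apply/set0Pn; exists y; rewrite inE.
Qed.

Lemma tough_density_bound (t : rat) : (0 < t)%R ->
  (t * ((max_degree e)%:R - density e) <= density e)%R -> tough e t.
Proof.
move=> t_gt0 t_le U; rewrite ler_pdivlMr // -(ler_pM2l density_gt0).
have := density_comps_minus_le U dense; have : (0 <= #|U|%:R :> rat)%R by [].
nra.
Qed.

Lemma regular_degree v : regular e -> degree e v = max_degree e.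
Proof.
move=> reg; apply/eqP; rewrite eqn_leq leq_bigmax.
by apply/bigmax_leqP => w _; rewrite (reg w v).
Qed.

Lemma regular_max_degree_le_density :
  regular e -> ((max_degree e)%:R <= 2 * density e :> rat)%R.
Proof.
move=> reg; have n_gt0 : (0 < #|T|%:R :> rat)%R.
  by case/set0Pn: E_neq0 => S /edgesP [[x _] _ _]; rewrite ltr0n; apply/card_gt0P; exists x.
have := handshake; under eq_bigr do rewrite regular_degree //.
rewrite sum_nat_const cardsT => /(congr1 (fun n => n%:R : rat)).
rewrite !natrM card_edges_density natr_mrank comps_edges => deg_sum.
rewrite -(ler_pM2l n_gt0); have : (0 <= (ncomp [set: T] e)%:R * density e :> rat)%R.
  by rewrite mulr_ge0 ?density_ge0.
lra.
Qed.

End Graph.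

Theorem theorem3p13 (T : finType) (e : rel T)
  (e_sym : symmetric e) (e_irr : irreflexive e)
  (hE : edges e != set0) (hud : uniformly_dense e) :
  tough e (density e / (max_degree e)%:R)%R /\
  (regular e -> connected_graph e -> tough e 1%R).
Proof.
have rho_gt0 := density_gt0 e_irr hE.
have Delta_gt0 : (0 < (max_degree e)%:R :> rat)%R by rewrite ltr0n (max_degree_gt0 hE).
split => [|reg _]; apply: (tough_density_bound e_sym e_irr hE hud).
- by rewrite divr_gt0.
- by rewrite mulrBr divfK ?lt0r_neq0 // gerBl mulr_ge0 ?divr_ge0 // ltW.
- by [].
- by rewrite mul1r; have := regular_max_degree_le_density e_sym e_irr hE reg; lra.
Qed.
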